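(* A real symmetric matrix has symmetric tropical rank one if and only if it has symmetric Kapranov rank one. Equivalently, the $2\times 2$ minors of an $n\times n$ symmetric matrix of indeterminates form a tropical basis.
   Context: Let $\tilde K$ be the field of Hahn series $\sum_{\alpha\in A}c_\alpha t^\alpha$ ($A\subset\mathbb R$ well-ordered, $c_\alpha\in\mathbb C$); for nonzero $a\in\tilde K$, $\deg(a)$ is the smallest exponent with nonzero coefficient. A symmetric lift of a real symmetric $n\times n$ matrix $A$ is a symmetric matrix $\tilde A$ over $\tilde K$ with all entries nonzero and $\deg(\tilde a_{i,j})=A_{i,j}$; the symmetric Kapranov rank of $A$ is the minimum rank of a symmetric lift. For an $r\times r$ submatrix of $A$ with row index set $I$ and column index set $J$, each bijection $\rho:I\to J$ gives a monomial $\prod_{i\in I}X_{i,\rho(i)}$ in commuting variables subject to $X_{i,j}=X_{j,i}$, with value $\sum_{i\in I}A_{i,\rho(i)}$; the submatrix is symmetrically tropically singular if the minimum value is attained by at least two distinct monomials. The symmetric tropical rank of $A$ is the largest $r$ such that $A$ has an $r\times r$ submatrix that is not symmetrically tropically singular. The $r\times r$ minors form a tropical basis if for every real symmetric $n\times n$ $A$: all $r\times r$ submatrices are symmetrically tropically singular iff $A$ has a symmetric lift of rank $\le r-1$. *)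

From HB Require Import structures.
From mathcomp Require Import all_boot all_order all_algebra.
From mathcomp Require Import boolp classical_sets functions fsbigop reals.
From mathcomp Require Import complex.
Set Implicit Arguments. Unset Strict Implicit. Unset Printing Implicit Defensive.
Import Order.TTheory GRing.Theory Num.Theory.
Local Open Scope ring_scope.
Local Open Scope classical_set_scope.

Section Hahn.
Variable R : realType.

Definition C := (R[i])%type.

(* A Hahn series sum_{a in A} c_a t^a is represented by its coefficient
   function R -> C; it is a Hahn series iff its support is well-ordered. *)
Definition supp (f : R -> C) : set R := [set a | f a != 0].

Definition hahn (f : R -> C) : Prop :=
  forall S : set R, S `<=` supp f -> S !=set0 ->
    exists2 m, S m & forall x, S x -> m <= x.

(* Product of Hahn series (Cauchy product); for Hahn series the index set
   below is finite. *)
Definition hmul (f g : R -> C) : R -> C :=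
  fun c => \sum_(a \in [set a | f a != 0 /\ g (c - a) != 0]) (f a * g (c - a)).

Definition has_deg (f : R -> C) (d : R) : Prop :=
  f d != 0 /\ forall x, f x != 0 -> d <= x.

Definition hrank_le1 n (L : 'I_n -> 'I_n -> R -> C) : Prop :=
  forall i j k l : 'I_n, hmul (L i k) (L j l) = hmul (L i l) (L j k).

Definition sym_lift n (A : 'M[R]_n) (L : 'I_n -> 'I_n -> R -> C) : Prop :=
  (forall i j, hahn (L i j)) /\ (forall i j, L i j = L j i) /\
  (forall i j, has_deg (L i j) (A i j)).

(* symmetric Kapranov rank one: minimum rank of a symmetric lift is 1.
   (Every lift has rank >= 1 when n > 0, since its entries are nonzero.) *)
Definition sym_kapranov_rank_one n (A : 'M[R]_n) : Prop :=
  exists L, sym_lift A L /\ hrank_le1 L.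

Definition upair n (i j : 'I_n) : 'I_n * 'I_n :=
  if (i <= j)%N then (i, j) else (j, i).

(* rho is a bijection I -> J (represented by a function on 'I_n,
   only its values on I matter) *)
Definition is_bij n (I J : {set 'I_n}) (rho : 'I_n -> 'I_n) : Prop :=
  {in I &, injective rho} /\ rho @: I = J.

(* monomial prod_{i in I} X_{i, rho i} with X_{ij} = X_{ji}, as the
   multiset (multiplicity function) of unordered pairs *)
Definition monomial n (I : {set 'I_n}) (rho : 'I_n -> 'I_n) : 'I_n * 'I_n -> nat :=
  fun p => #|[set i in I | upair i (rho i) == p]|.

Definition mvalue n (A : 'M[R]_n) (I : {set 'I_n}) (rho : 'I_n -> 'I_n) : R :=
  \sum_(i in I) A i (rho i).

Definition sym_trop_singular n (A : 'M[R]_n) (I J : {set 'I_n}) : Prop :=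
  exists rho1 rho2,
    [/\ is_bij I J rho1, is_bij I J rho2,
        monomial I rho1 <> monomial I rho2,
        mvalue A I rho1 = mvalue A I rho2 &
        forall rho, is_bij I J rho -> mvalue A I rho1 <= mvalue A I rho].

Definition has_nonsing_sub n (A : 'M[R]_n) (r : nat) : Prop :=
  exists I J : {set 'I_n}, [/\ #|I| = r, #|J| = r & ~ sym_trop_singular A I J].

Definition sym_trop_rank_eq n (A : 'M[R]_n) (r : nat) : Prop :=
  has_nonsing_sub A r /\ forall r', (r < r')%N -> ~ has_nonsing_sub A r'.

Definition all_2x2_singular n (A : 'M[R]_n) : Prop :=
  forall I J : {set 'I_n}, #|I| = 2%N -> #|J| = 2%N -> sym_trop_singular A I J.

End Hahn.

From mathcomp Require Import all_boot all_order all_algebra perm.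
From mathcomp Require Import reals Rstruct.
From mathcomp Require Import boolp classical_sets fsbigop complex.
From mathcomp Require Import lra.
Set Implicit Arguments. Unset Strict Implicit. Unset Printing Implicit Defensive.
Import Order.TTheory GRing.Theory Num.Theory.
Local Open Scope ring_scope.

(** Both conditions are equivalent to [2 A_ij = A_ii + A_jj] for all [i, j].
  If [L] is a symmetric lift of rank one then [L_ii L_jj = L_ij L_ji = L_ij^2],
  and degrees add under multiplication of Hahn series.  Conversely, under this
  condition the monomials [t^(A_ij)] form a symmetric lift of rank one, and
  every bijection [rho : I -> J] has the same value
  [(sum_(i in I) A_ii + sum_(j in J) A_jj) / 2]; since composing a bijection
  with a transposition changes its monomial, every square submatrix of size at
  least two is symmetrically tropically singular.  Finally, the singularity of
  the submatrix on rows and columns [{i, j}] forces [A_ii + A_jj = 2 A_ij],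
  because its only two monomials [X_ii X_jj] and [X_ij^2] are distinct. *)

Section HahnDegree.
Local Open Scope classical_set_scope.
Variable R : realType.
Implicit Types (f g : R -> C R) (a b d : R).

Lemma has_deg_unique f d d' : has_deg f d -> has_deg f d' -> d = d'.
Proof.
by move=> [fd fdmin] [fd' fd'min]; apply/eqP; rewrite eq_le fdmin ?fd'min.
Qed.

Lemma hmul_at_deg f g df dg : has_deg f df -> has_deg g dg ->
  hmul f g (df + dg) = f df * g dg.
Proof.
move=> [f0 fmin] [g0 gmin]; rewrite /hmul.
have -> : [set a | f a != 0 /\ g (df + dg - a) != 0] = [set df].
  apply/seteqP; split => a /=; last by move->; rewrite addrC addKr.
  move=> [/fmin dfa /gmin]; rewrite lerBrDr addrC lerD2r => adf.
  by apply/eqP; rewrite eq_le adf.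
by rewrite fsbig_set1 addrC addKr.
Qed.

Lemma hmul_below_deg f g df dg c : has_deg f df -> has_deg g dg ->
  c < df + dg -> hmul f g c = 0.
Proof.
move=> [_ fmin] [_ gmin] c_lt; rewrite /hmul.
have -> : [set a | f a != 0 /\ g (c - a) != 0] = set0.
  apply/seteqP; split => a //= [/fmin dfa /gmin]; rewrite lerBrDr addrC.
  by apply/negP; rewrite -ltNge (lt_le_trans c_lt) // lerD2r.
by rewrite fsbig_set0.
Qed.

Lemma has_deg_hmul f g df dg : has_deg f df -> has_deg g dg ->
  has_deg (hmul f g) (df + dg).
Proof.
move=> degf degg; split.
  by rewrite (hmul_at_deg degf degg) mulf_neq0 //; [case: degf | case: degg].
move=> c; apply: contraR; rewrite -ltNge => c_lt.
by rewrite (hmul_below_deg degf degg c_lt).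
Qed.

Definition tpow a : R -> C R := fun x => if x == a then 1 else 0.

Lemma tpow_neq0 a x : (tpow a x != 0) = (x == a).
Proof. by rewrite /tpow; case: (x == a); rewrite ?oner_eq0 ?eqxx. Qed.

Lemma supp_tpow a : supp (tpow a) = [set a].
Proof. by apply/seteqP; split => x; rewrite /supp /= tpow_neq0 => /eqP. Qed.

Lemma hahn_tpow a : hahn (tpow a).
Proof.
rewrite /hahn supp_tpow => S S_a [s Ss]; have sa := S_a s Ss.
exists a; first by rewrite -sa.
by move=> x /S_a ->.
Qed.

Lemma has_deg_tpow a : has_deg (tpow a) a.
Proof. by split=> [|x]; rewrite tpow_neq0 // => /eqP ->. Qed.

Lemma hmul_tpow a b : hmul (tpow a) (tpow b) = tpow (a + b).
Proof.
apply: funext => c; have [->|c_neq] := eqVneq c (a + b).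
  by rewrite (hmul_at_deg (has_deg_tpow a) (has_deg_tpow b)) /tpow !eqxx mulr1.
rewrite /hmul /tpow (negbTE c_neq).
have -> : [set x | tpow a x != 0 /\ tpow b (c - x) != 0] = set0.
  apply/seteqP; split => x //=; rewrite !tpow_neq0 => -[/eqP -> /eqP cb].
  by move: c_neq; rewrite -cb subrKC eqxx.
by rewrite fsbig_set0.
Qed.

End HahnDegree.

Section Bijections.
Variable n : nat.
Implicit Types (x y : 'I_n) (I J : {set 'I_n}) (rho : 'I_n -> 'I_n).

Lemma upair_eq x y x' y' : upair x y = upair x' y' ->
  (x = x' /\ y = y') \/ (x = y' /\ y = x').
Proof. by rewrite /upair; case: leqP => _; case: leqP => _ [-> ->]; tauto. Qed.

Lemma upair_injr x y y' : upair x y = upair x y' -> y = y'.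
Proof. by case/upair_eq => [[_ ->] | [-> <-]]. Qed.

Lemma upair_injl x x' y : upair x y = upair x' y -> x = x'.
Proof. by case/upair_eq => [[-> _] | [-> <-]]. Qed.

Lemma eq_monomial I rho rho' : {in I, rho =1 rho'} ->
  monomial I rho = monomial I rho'.
Proof.
move=> eq_rho; apply: funext => p; apply: eq_card => x; rewrite !inE.
by case xI: (x \in I); rewrite //= eq_rho.
Qed.

Lemma is_bij_card I J rho : {in I &, injective rho} ->
  {in I, forall x, rho x \in J} -> #|I| = #|J| -> is_bij I J rho.
Proof.
move=> rho_inj rhoJ cardIJ; split => //; apply/eqP.
rewrite eqEcard card_in_imset // cardIJ leqnn andbT.
by apply/fintype.subsetP => _ /imsetP [x xI ->]; apply: rhoJ.
Qed.

Lemma is_bij_mem I J rho x : is_bij I J rho -> x \in I -> rho x \in J.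
Proof. by move=> [_ <-] xI; apply: imset_f. Qed.

Lemma exists_is_bij I J : #|I| = #|J| -> exists rho, is_bij I J rho.
Proof.
rewrite !cardE => cardIJ.
pose rho x := nth x (enum J) (index x (enum I)).
have idx_lt x : x \in I -> (index x (enum I) < size (enum J))%N.
  by rewrite -cardIJ index_mem mem_enum.
exists rho; apply: is_bij_card; last by rewrite !cardE.
  move=> x y xI yI; rewrite /rho (set_nth_default x _ (idx_lt y yI)).
  move/eqP; rewrite nth_uniq ?enum_uniq ?idx_lt // => /eqP.
  by apply: (index_inj x); rewrite mem_enum.
by move=> x xI; rewrite -mem_enum mem_nth ?idx_lt.
Qed.

Lemma exists_is_bij_monomial_neq I J : #|I| = #|J| -> (1 < #|I|)%N ->
  exists rho1 rho2,
    [/\ is_bij I J rho1, is_bij I J rho2 & monomial I rho1 <> monomial I rho2].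
Proof.
move=> cardIJ /card_gt1P [i1 [i2 [i1I i2I i12]]].
have [rho1 bij1] := exists_is_bij cardIJ; have [rho1_inj _] := bij1.
pose rho2 := rho1 \o tperm i1 i2.
have tpermI x : x \in I -> tperm i1 i2 x \in I by case: tpermP => [->|->|].
have bij2 : is_bij I J rho2.
  apply: is_bij_card => // [x y xI yI /rho1_inj eq_xy | x xI].
    by apply: (can_inj (tpermK i1 i2)); apply: eq_xy; apply: tpermI.
  by apply: (is_bij_mem bij1); apply: tpermI.
(* The pair [{i1, rho1 i1}] occurs strictly less often in the monomial of [rho2]. *)
exists rho1, rho2; split => // /(congr1 (fun m => m (upair i1 (rho1 i1)))) /eqP.
apply/negP; rewrite neq_ltn; apply/orP; right; apply: proper_card.
apply/properP; split.
  apply/fintype.subsetP => x; rewrite !inE /rho2 /= => /andP [xI /eqP].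
  rewrite xI /=; case: (tpermP i1 i2 x) => [-> | -> | _ _ -> //].
    by move=> /upair_injr /rho1_inj eq_i21; rewrite eq_i21 ?eqxx in i12.
  by move=> /upair_injl eq_i21; rewrite eq_i21 eqxx in i12.
exists i1; rewrite !inE i1I /rho2 /= ?eqxx // tpermL.
by apply/eqP => /upair_injr /rho1_inj eq_i21; rewrite eq_i21 ?eqxx in i12.
Qed.

End Bijections.

Section RankOne.
Variables (R : realType) (n : nat) (A : 'M[R]_n).
Implicit Types (x y : 'I_n) (I J : {set 'I_n}) (rho : 'I_n -> 'I_n).

(* Equivalently [A_ij = a_i + a_j] with [a_i = A_ii / 2]. *)
Definition diag_mean := forall x y, A x y *+ 2 = A x x + A y y.

Lemma diag_mean_sym : diag_mean -> forall x y, A x y = A y x.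
Proof. by move=> dmA x y; apply: (@pmulrnI _ 2) => //; rewrite !dmA addrC. Qed.

Lemma sym_kapranov_rank_one_diag_mean : sym_kapranov_rank_one A -> diag_mean.
Proof.
move=> [L [[_ [Lsym Ldeg]] Lrk]] x y.
have deg_yx : has_deg (L x y) (A y x) by rewrite Lsym.
have deg_prod := has_deg_hmul (Ldeg x x) (Ldeg y y).
rewrite (Lrk x y x y) in deg_prod.
rewrite (has_deg_unique deg_prod (has_deg_hmul (Ldeg x y) (Ldeg y x))).
by rewrite (has_deg_unique deg_yx (Ldeg x y)) mulr2n.
Qed.

Lemma diag_mean_sym_kapranov_rank_one : diag_mean -> sym_kapranov_rank_one A.
Proof.
move=> dmA; exists (fun x y => tpow (A x y)); split; first split.
- by move=> x y; apply: hahn_tpow.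
- split=> x y; last exact: has_deg_tpow.
  by rewrite (diag_mean_sym dmA).
move=> i j k l; rewrite !hmul_tpow; congr tpow.
have := dmA i k; have := dmA j l; have := dmA i l; have := dmA j k.
rewrite !mulr2n; lra.
Qed.

Lemma mvalue_diag_mean I J rho : diag_mean -> is_bij I J rho ->
  mvalue A I rho *+ 2 = \sum_(x in I) A x x + \sum_(y in J) A y y.
Proof.
move=> dmA [rho_inj <-]; rewrite /mvalue -sumrMnl.
under eq_bigr do rewrite dmA.
by rewrite big_split /= big_imset.
Qed.

Lemma diag_mean_sym_trop_singular I J : diag_mean ->
  #|I| = #|J| -> (1 < #|I|)%N -> sym_trop_singular A I J.
Proof.
move=> dmA cardIJ cardI.
have [rho1 [rho2 [bij1 bij2 neq12]]] := exists_is_bij_monomial_neq cardIJ cardI.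
have mvalue_const rho : is_bij I J rho -> mvalue A I rho = mvalue A I rho1.
  move=> bij; apply: (@pmulrnI _ 2) => //.
  by rewrite (mvalue_diag_mean dmA bij) (mvalue_diag_mean dmA bij1).
exists rho1, rho2; split => //; first by rewrite mvalue_const.
by move=> rho /mvalue_const ->.
Qed.

Lemma has_nonsing_sub1 : (0 < n)%N -> has_nonsing_sub A 1.
Proof.
move=> n_gt0; pose x := Ordinal n_gt0.
exists [set x], [set x]; split; rewrite ?cards1 //.
move=> [rho1 [rho2 [bij1 bij2 neq12 _ _]]]; apply: neq12.
have fix1 rho : is_bij [set x] [set x] rho -> rho x = x.
  by move=> bij; apply/set1P; apply: (is_bij_mem bij); apply: set11.
by apply: eq_monomial => _ /set1P ->; rewrite !fix1.
Qed.

Lemma is_bij_pair x y rho : x != y -> is_bij [set x; y] [set x; y] rho ->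
  (rho x = x /\ rho y = y) \/ (rho x = y /\ rho y = x).
Proof.
move=> xy bij; have [rho_inj _] := bij.
have [xI yI] : x \in [set x; y] /\ y \in [set x; y] by rewrite set21 set22.
have rho_xy : rho x != rho y by apply: contra_neq xy; exact: rho_inj.
move: (is_bij_mem bij xI) (is_bij_mem bij yI) rho_xy.
by do 2!case/set2P=> ->; rewrite ?eqxx //; tauto.
Qed.

Lemma sym_trop_singular_pair x y : (forall i j, A i j = A j i) -> x != y ->
  sym_trop_singular A [set x; y] [set x; y] -> A x y *+ 2 = A x x + A y y.
Proof.
move=> Asym xy [rho1 [rho2 [bij1 bij2 neq12 val12 _]]].
have mvalue_pair rho : mvalue A [set x; y] rho = A x (rho x) + A y (rho y).
  by rewrite /mvalue big_setU1 ?big_set1 ?inE.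
have monomial_pair rho rho' : rho x = rho' x -> rho y = rho' y ->
    monomial [set x; y] rho = monomial [set x; y] rho'.
  by move=> ex ey; apply: eq_monomial => z /set2P [] ->.
move: val12; rewrite !mvalue_pair.
case: (is_bij_pair xy bij1) => -[e1 f1]; case: (is_bij_pair xy bij2) => -[e2 f2];
  try by case: neq12; apply: monomial_pair; congruence.
- by rewrite e1 f1 e2 f2 (Asym y x) mulr2n => ->.
- by rewrite e1 f1 e2 f2 (Asym y x) mulr2n => <-.
Qed.

Lemma sym_kapranov_rank_oneP : sym_kapranov_rank_one A <-> diag_mean.
Proof.
split; first exact: sym_kapranov_rank_one_diag_mean.
exact: diag_mean_sym_kapranov_rank_one.
Qed.

Lemma all_2x2_singularP : (forall i j, A i j = A j i) ->
  all_2x2_singular A <-> diag_mean.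
Proof.
move=> Asym; split=> [sing2 x y | dmA I J cardI cardJ].
  have [<-|xy] := eqVneq x y; first by rewrite mulr2n.
  have card_xy : #|[set x; y]| = 2%N by rewrite cards2 xy.
  exact: sym_trop_singular_pair Asym xy (sing2 _ _ card_xy card_xy).
by apply: diag_mean_sym_trop_singular; rewrite ?cardI ?cardJ.
Qed.

Lemma sym_trop_rank_eq1P : (0 < n)%N -> (forall i j, A i j = A j i) ->
  sym_trop_rank_eq A 1 <-> diag_mean.
Proof.
move=> n_gt0 Asym; split.
  move=> [_ nonsing2]; apply/all_2x2_singularP => // I J cardI cardJ.
  apply: contrapT => nsing.
  by apply: (nonsing2 2%N) => //; exists I, J.
move=> dmA; split; first exact: has_nonsing_sub1.
move=> r r_gt1 [I [J [cardI cardJ []]]].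
by apply: diag_mean_sym_trop_singular; rewrite ?cardI ?cardJ.
Qed.

End RankOne.

Theorem theorem5 (n : nat) (A : 'M[Rdefinitions.R]_n) :
  (0 < n)%N -> A^T = A ->
  (sym_trop_rank_eq A 1 <-> sym_kapranov_rank_one A) /\
  (all_2x2_singular A <-> sym_kapranov_rank_one A).
Proof.
move=> n_gt0 AT; have Asym x y : A x y = A y x by rewrite -[in LHS]AT mxE.
by rewrite sym_kapranov_rank_oneP sym_trop_rank_eq1P // all_2x2_singularP.
Qed.
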